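(* For any finitely generated group $H$, the set $\mathcal E_H=\{G\in\mathcal G:\ H\text{ is embeddable into }\overline G\}$ is $F_\sigma$ in $\mathcal G$.
   Context: Let $\mathbb N=\{1,2,3,\dots\}$. Equip $\mathbb N^{\mathbb N\times\mathbb N}$ with the product topology of the discrete topology on $\mathbb N$. Let $\mathcal G$ be the subspace consisting of those $A\in\mathbb N^{\mathbb N\times\mathbb N}$ that are the multiplication table of a group on the underlying set $\mathbb N$ whose identity element is $1$. For $G\in\mathcal G$, $\overline G$ denotes the group on $\mathbb N$ with multiplication table $G$. *)

From HB Require Import structures.
From mathcomp Require Import all_boot all_order.
From mathcomp Require Import all_classical all_reals all_analysis.
Set Implicit Arguments. Unset Strict Implicit. Unset Printing Implicit Defensive.
Local Open Scope classical_set_scope.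

(* Convention: the paper's N = {1,2,3,...} is represented by Rocq's nat via
   the bijection n |-> n-1; so the paper's element 1 is our 0.
   The space N^(N x N) with the product of discrete topologies is
   {ptws nat * nat -> nat} (nat carries the discrete topology in
   mathcomp-analysis, prod_topology is the product topology). *)
Definition Space := {ptws (nat * nat) -> nat}.

Definition is_group_table (A : Space) : Prop :=
  [/\ (forall x y z, A (A (x, y), z) = A (x, A (y, z))),
      (forall x, A (0%N, x) = x /\ A (x, 0%N) = x) &
      (forall x, exists y, A (x, y) = 0%N /\ A (y, x) = 0%N)].

Definition GG : set Space := [set A | is_group_table A].

(* F_sigma subsets of the subspace GG: countable unions of relatively closed
   subsets of GG, i.e. of traces on GG of closed subsets of the ambient space. *)
Definition Fsigma_in (S : set Space) (E : set Space) : Prop :=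
  E `<=` S /\
  exists C : nat -> set Space, (forall n, closed (C n)) /\
    E = S `&` \bigcup_n C n.

Record is_group (H : Type) (mul : H -> H -> H) (e : H) (inv : H -> H) : Prop := {
  grp_assoc : forall x y z, mul (mul x y) z = mul x (mul y z);
  grp_mul1 : forall x, mul e x = x;
  grp_mulV : forall x, mul (inv x) x = e }.

Inductive gen (H : Type) (mul : H -> H -> H) (e : H) (inv : H -> H)
    (n : nat) (s : 'I_n -> H) : H -> Prop :=
  | gen_e : gen mul e inv s e
  | gen_s i : gen mul e inv s (s i)
  | gen_inv x : gen mul e inv s x -> gen mul e inv s (inv x)
  | gen_mul x y : gen mul e inv s x -> gen mul e inv s y ->
                  gen mul e inv s (mul x y).

Definition fin_generated (H : Type) (mul : H -> H -> H) (e : H) (inv : H -> H)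
  : Prop := exists (n : nat) (s : 'I_n -> H), forall x, gen mul e inv s x.

Definition embeds (H : Type) (mul : H -> H -> H) (A : Space) : Prop :=
  exists f : H -> nat, injective f /\
    forall x y, f (mul x y) = A (f x, f y).

Definition EE (H : Type) (mul : H -> H -> H) : set Space :=
  [set A | GG A /\ embeds mul A].

From mathcomp Require Import all_boot all_order.
From mathcomp Require Import all_classical all_reals all_analysis.
From mathcomp Require Import zify.

Set Implicit Arguments.
Unset Strict Implicit.
Unset Printing Implicit Defensive.
Local Open Scope classical_set_scope.

(* Fix generators s_1, ..., s_n of H and read words over the letters
   s_i^(+-1) both in H and, after choosing a value t_j in N for each letter,
   in the table A.  H embeds into the group of A iff some finite choice t makes
   the two evaluations identify exactly the same pairs of words: the embedding
   provides t, and conversely mapping h to the A-value of any word for h is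
   then well defined, injective and multiplicative.  For fixed t this
   condition involves, for each pair of words, finitely many entries of A, so
   it defines a closed set; there are countably many t. *)

Definition locally_constant {T : topologicalType} {U : Type} (g : T -> U) :=
  forall x, \forall y \near x, g y = g x.

Section LocallyConstant.
Context {T : topologicalType} {U : Type}.

Lemma locally_constant_open_preimage (g : T -> U) (P : set U) :
  locally_constant g -> open (g @^-1` P).
Proof.
move=> gC; rewrite openE => x Pgx; rewrite /interior.
by near=> y; rewrite /preimage /= (near (gC x) y).
Unshelve. all: by end_near.
Qed.

Lemma locally_constant_closed_preimage (g : T -> U) (P : set U) :
  locally_constant g -> closed (g @^-1` P).
Proof.
move=> gC; have -> : g @^-1` P = ~` (g @^-1` ~` P).
  by apply/seteqP; split=> x /=; [move=> Pgx /(_ Pgx)|move/boolp.contrapT].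
exact/open_closedC/locally_constant_open_preimage.
Qed.

Lemma locally_constant_pair {V : Type} (g1 : T -> U) (g2 : T -> V) :
  locally_constant g1 -> locally_constant g2 ->
  locally_constant (fun x => (g1 x, g2 x)).
Proof.
move=> g1C g2C x.
by near=> y; rewrite (near (g1C x) y) // (near (g2C x) y).
Unshelve. all: by end_near.
Qed.

End LocallyConstant.

Lemma locally_constant_coord (p : nat * nat) :
  locally_constant (fun A : Space => A p).
Proof.
move=> A; have /pointwise_cvgP/(_ p)/discrete_cvg : {ptws, nbhs A --> A} by [].
exact.
Qed.

Lemma locally_constant_apply (g : Space -> nat * nat) :
  locally_constant g -> locally_constant (fun A : Space => A (g A)).
Proof.
move=> gC A.
near=> B; rewrite (near (gC A) B) //.
exact: (near (locally_constant_coord (g A) A) B).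
Unshelve. all: by end_near.
Qed.

Definition table_mul (A : Space) (x y : nat) : nat := A (x, y).

Section ProductsOfWords.
Variables (M : Type) (op : M -> M -> M) (one : M).
Hypotheses (opA : forall x y z, op (op x y) z = op x (op y z))
           (op1x : forall x, op one x = x).

Lemma big_cat_semigroup (F : nat -> M) (w1 w2 : seq nat) :
  \big[op/one]_(j <- w1 ++ w2) F j =
  op (\big[op/one]_(j <- w1) F j) (\big[op/one]_(j <- w2) F j).
Proof.
elim: w1 => [|j w IH]; first by rewrite big_nil op1x.
by rewrite cat_cons !big_cons IH opA.
Qed.

End ProductsOfWords.

Lemma big_table_mul_cat (A : Space) (F : nat -> nat) (w1 w2 : seq nat) :
  GG A -> \big[table_mul A/0%N]_(j <- w1 ++ w2) F j =
    A (\big[table_mul A/0%N]_(j <- w1) F j, \big[table_mul A/0%N]_(j <- w2) F j).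
Proof.
case=> Aassoc A1 _; apply: big_cat_semigroup => [x y z|x]; first exact: Aassoc.
by case: (A1 x).
Qed.

Lemma locally_constant_big_table_mul (F : nat -> nat) (w : seq nat) :
  locally_constant (fun A : Space => \big[table_mul A/0%N]_(j <- w) F j).
Proof.
elim: w => [|j w IH].
  by move=> A; apply: filterE => B; rewrite !big_nil.
have -> : (fun A : Space => \big[table_mul A/0%N]_(i <- j :: w) F i) =
          (fun A : Space => A (F j, \big[table_mul A/0%N]_(i <- w) F i)).
  by apply: boolp.funext => A; rewrite big_cons.
apply: locally_constant_apply; apply: locally_constant_pair IH => A.
exact: filterE.
Qed.

Section AbstractGroup.
Variables (H : Type) (mul : H -> H -> H) (e : H) (inv : H -> H).
Hypothesis HG : is_group mul e inv.

Let mulA := grp_assoc HG.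
Let mul1g := grp_mul1 HG.
Let mulVg := grp_mulV HG.

Lemma mulgV x : mul x (inv x) = e.
Proof.
by rewrite -(mul1g (mul x _)) -{1}(mulVg (inv x)) mulA -(mulA (inv x)) mulVg
   mul1g.
Qed.

Lemma mulg1 x : mul x e = x.
Proof. by rewrite -(mulVg x) -mulA mulgV mul1g. Qed.

Lemma mulIg x y z : mul y x = mul z x -> y = z.
Proof. by move=> eq_yz; rewrite -(mulg1 y) -(mulgV x) -mulA eq_yz mulA mulgV mulg1. Qed.

Lemma invgK x : inv (inv x) = x.
Proof. by apply: (@mulIg (inv x)); rewrite mulVg mulgV. Qed.

Lemma invMg x y : inv (mul x y) = mul (inv y) (inv x).
Proof.
apply: (@mulIg (mul x y)).
by rewrite mulVg mulA -(mulA (inv x)) mulVg mul1g mulVg.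
Qed.

Lemma table_hom1 (A : Space) (f : H -> nat) :
  GG A -> (forall x y, f (mul x y) = A (f x, f y)) -> f e = 0%N.
Proof.
case=> Aassoc A1 AV f_hom.
have ee : A (f e, f e) = f e by rewrite -f_hom mul1g.
have [y [eyA _]] := AV (f e).
by rewrite -(proj2 (A1 (f e))) -eyA -Aassoc ee.
Qed.

Section Letters.
Variables (n : nat) (s : 'I_n -> H).

(* Letter j < n stands for s_j, letter n + j for its inverse, and all
   larger letters for the identity. *)
Definition letter (j : nat) : H :=
  match (insub j : option 'I_n) with
  | Some i => s i
  | None => match (insub (j - n) : option 'I_n) with
            | Some i => inv (s i) | None => e end end.

Lemma letter_gen (i : 'I_n) : letter i = s i.
Proof. by rewrite /letter valK. Qed.

Lemma letter_gen_inv (i : 'I_n) : letter (i + n) = inv (s i).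
Proof. by rewrite /letter insubF ?addnK ?valK // ltnNge leq_addl. Qed.

Lemma letter_out j : (n + n <= j)%N -> letter j = e.
Proof. by move=> j_big; rewrite /letter !insubF //; apply/negbTE; lia. Qed.

Lemma gen_big_letter x : gen mul e inv s x ->
  exists w : seq nat, \big[mul/e]_(j <- w) letter j = x.
Proof.
suff gen_words : gen mul e inv s x ->
  (exists w : seq nat, \big[mul/e]_(j <- w) letter j = x) /\
  (exists w : seq nat, \big[mul/e]_(j <- w) letter j = inv x).
  by move=> /gen_words[].
have big_cat := big_cat_semigroup mulA mul1g letter.
elim=> [|i|y _ [[w1 <-] [w2 w2E]]|y z _ [[w1 <-] [w2 w2E]] _ [[w3 <-] [w4 w4E]]].
- by split; exists [::]; rewrite big_nil // -[RHS]mulg1 mulVg.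
- split; [exists [:: val i]|exists [:: (val i + n)%N]];
    by rewrite big_cons big_nil mulg1 ?letter_gen ?letter_gen_inv.
- by split; [exists w2|exists w1; rewrite invgK].
- split; [exists (w1 ++ w3)|exists (w4 ++ w2)]; rewrite big_cat //.
  by rewrite w4E w2E invMg.
Qed.

End Letters.

Section Embedding.
Variables (l : nat -> H) (m : nat).
Hypotheses (l_out : forall j, (m <= j)%N -> l j = e)
           (l_span : forall x, exists w : seq nat, \big[mul/e]_(j <- w) l j = x).

(* Letter j is sent to nth 0 t j, hence to the identity 0 beyond the end of t. *)
Definition faithful_assignment (t : seq nat) (A : Space) :=
  forall w1 w2 : seq nat,
    \big[mul/e]_(j <- w1) l j = \big[mul/e]_(j <- w2) l j <->
    \big[table_mul A/0%N]_(j <- w1) nth 0%N t j =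
    \big[table_mul A/0%N]_(j <- w2) nth 0%N t j.

Lemma closed_faithful_assignment t : closed (faithful_assignment t).
Proof.
have -> : faithful_assignment t = \bigcap_(w in [set: seq nat * seq nat])
    (fun A => (\big[table_mul A/0%N]_(j <- w.1) nth 0%N t j,
               \big[table_mul A/0%N]_(j <- w.2) nth 0%N t j)) @^-1`
    [set p | \big[mul/e]_(j <- w.1) l j = \big[mul/e]_(j <- w.2) l j <->
             p.1 = p.2].
  apply/seteqP; split=> A /=; first by move=> tA [w1 w2] _; exact: tA.
  by move=> tA w1 w2; exact: (tA (w1, w2)).
apply: closed_bigI => w _; apply: locally_constant_closed_preimage.
by apply: locally_constant_pair; apply: locally_constant_big_table_mul.
Qed.

Lemma embeds_faithful_assignment (A : Space) :
  GG A -> embeds mul A -> exists t, faithful_assignment t A.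
Proof.
move=> GA [f [f_inj f_hom]].
have f_e := table_hom1 GA f_hom.
exists (mkseq (f \o l) m) => w1 w2.
have big_f w : \big[table_mul A/0%N]_(j <- w) nth 0%N (mkseq (f \o l) m) j =
               f (\big[mul/e]_(j <- w) l j).
  rewrite (big_morph f (op1 := table_mul A) f_hom f_e); apply: eq_bigr => j _.
  have [j_small|j_big] := ltnP j m; first by rewrite nth_mkseq.
  by rewrite nth_default ?size_mkseq //= l_out.
by rewrite !big_f; split=> [->|/f_inj].
Qed.

Lemma faithful_assignment_embeds (A : Space) t :
  GG A -> faithful_assignment t A -> embeds mul A.
Proof.
move=> GA tA; have [word wordE] := boolp.choice l_span.
exists (fun x => \big[table_mul A/0%N]_(j <- word x) nth 0%N t j); split.
  by move=> x y /tA; rewrite !wordE.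
move=> x y; rewrite -big_table_mul_cat //; apply/tA.
by rewrite big_cat_semigroup // !wordE.
Qed.

End Embedding.

End AbstractGroup.

Lemma Fsigma_in_countable_union (I : countType) (S E : set Space)
    (C : I -> set Space) :
  (forall i, closed (C i)) -> E = S `&` \bigcup_i C i -> Fsigma_in S E.
Proof.
move=> C_closed ->; split; first exact: subIsetl.
exists (fun k => if unpickle k is Some i then C i else set0); split.
  by move=> k; case: (unpickle k) => [i|]; [exact: C_closed|exact: closed0].
apply/seteqP; split=> A [SA [x _ CxA]]; split=> //.
- by exists (pickle x); rewrite // pickleK.
- by move: CxA; case: (unpickle x) => // i; exists i.
Qed.

Theorem lemma7p4 (H : Type) (mul : H -> H -> H) (e : H) (inv : H -> H) :
  is_group mul e inv -> fin_generated mul e inv ->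
  Fsigma_in GG (EE mul).
Proof.
move=> HG [n [s s_gen]].
pose l := letter e inv s.
have l_span x : exists w : seq nat, \big[mul/e]_(j <- w) l j = x.
  exact: (gen_big_letter HG (s_gen x)).
apply: (Fsigma_in_countable_union (C := faithful_assignment mul e l)) => [t|].
  exact: closed_faithful_assignment.
apply/seteqP; split=> A [GA].
  move=> /(embeds_faithful_assignment HG (@letter_out _ e inv _ s) GA) [t tA].
  by split=> //; exists t.
move=> [t _ tA]; split=> //.
exact: (@faithful_assignment_embeds _ _ _ _ HG l l_span A t GA tA).
Qed.
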